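(* Let $R=\bigoplus_{\alpha\in\Gamma}R_{\alpha}$ be a graded integral domain, let $\star$ be a semistar operation on $R$ such that $R^{\star}\subsetneq R_H$, and let $0\neq f\in R[X]$. Then the following conditions are equivalent: (1) $A_f$ is $\star_f$-invertible; (2) $A_f\,\mathrm{NA}(R,\star)$ is invertible; (3) $A_f\,\mathrm{NA}(R,\star)=f\,\mathrm{NA}(R,\star)$.
   Context: $\Gamma$ is a commutative cancellative monoid (written additively) whose quotient group $\langle\Gamma\rangle$ is torsion-free. A graded integral domain $R=\bigoplus_{\alpha\in\Gamma}R_\alpha$ is an integral domain that is the direct sum of additive subgroups $R_\alpha$ with $R_\alpha R_\beta\subseteq R_{\alpha+\beta}$. $K$ is its quotient field, $H$ the set of nonzero homogeneous elements of $R$, $R_H$ the homogeneous quotient field. For $a\in R$, $C(a)$ is the ideal generated by the homogeneous components of $a$; for $f=f_0+\cdots+f_nX^n\in R[X]$, $A_f:=\sum_i C(f_i)$. A semistar operation on $R$ is a map $\star$ from the set of nonzero $R$-submodules of $K$ to itself such that for all $0\ne x\in K$ and $E,F$: $(xE)^\star=xE^\star$; $E\subseteq F\Rightarrow E^\star\subseteq F^\star$; $E\subseteq E^\star$; $(E^\star)^\star=E^\star$. $\star_f$ is defined by $E^{\star_f}=\bigcup\{F^\star: F\subseteq E, F$ a nonzero finitely generated fractional ideal$\}$. A nonzero fractional ideal $I$ is $\star_f$-invertible if $(I(R:I))^{\star_f}=R^\star$, where $(R:I)=\{x\in K: xI\subseteq R\}$. $N(\star):=\{g\in R[X]: g\ne0,\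 A_g^\star=R^\star\}$ and $\mathrm{NA}(R,\star):=R[X]_{N(\star)}$. *)

From HB Require Import structures.
From mathcomp Require Import all_boot all_order all_algebra.
From mathcomp Require Import fraction.
Set Implicit Arguments. Unset Strict Implicit. Unset Printing Implicit Defensive.
Import GRing.Theory.
Local Open Scope ring_scope.

(* Elements of <Gamma> are differences a - b,
   and (by cancellativity) n(a - b) = 0 in <Gamma> iff n*a = n*b in Gamma. *)
Definition cancellative (G : nmodType) : Prop :=
  forall a b c : G, a + c = b + c -> a = b.

Definition quotient_group_torsion_free (G : nmodType) : Prop :=
  forall (n : nat) (a b : G), a *+ n.+1 = b *+ n.+1 -> a = b.

Definition grading_monoid (G : nmodType) : Prop :=
  cancellative G /\ quotient_group_torsion_free G.

Section Sets.
Variable F : fieldType.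

Definition span (S : F -> Prop) (T : F -> Prop) : F -> Prop :=
  fun x => exists s : seq (F * F),
    (forall p, p \in s -> S p.1 /\ T p.2) /\
    x = \sum_(p <- s) p.1 * p.2.

Definition prodset (I J : F -> Prop) : F -> Prop :=
  fun z => exists x y, I x /\ J y /\ z = x * y.

Definition mulmod (S I J : F -> Prop) : F -> Prop := span S (prodset I J).

Definition colon (S I : F -> Prop) : F -> Prop :=
  fun x => forall y, I y -> S (x * y).

Definition scaleset (x : F) (E : F -> Prop) : F -> Prop :=
  fun y => exists e, E e /\ y = x * e.

Definition incl (E E' : F -> Prop) : Prop := forall x, E x -> E' x.

Definition sameset (E E' : F -> Prop) : Prop := forall x, E x <-> E' x.

Definition submod (S E : F -> Prop) : Prop :=
  E 0 /\ (forall x y, E x -> E y -> E (x + y)) /\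
  (forall r x, S r -> E x -> E (r * x)).

Definition nz_submod (S E : F -> Prop) : Prop :=
  submod S E /\ exists x, x != 0 /\ E x.

Definition invertible (D I : F -> Prop) : Prop :=
  sameset (mulmod D I (colon D I)) D.

End Sets.

Section Graded.
Variables (G : nmodType) (K : fieldType).

(* R is a subring of the field K and K is the quotient field of R;
   Rg a is the homogeneous piece R_a; R is the internal direct sum of the R_a
   and R_a R_b <= R_(a+b). *)
Definition graded_domain (R : pred K) (Rg : G -> pred K) : Prop :=
  [/\ R 1, (forall x y, R x -> R y -> R (x - y)),
      (forall x y, R x -> R y -> R (x * y))
    & (forall x : K, exists a b, [/\ R a, R b, b != 0 & x = a / b])] /\
  [/\ (forall a, Rg a 0 /\ (forall x y, Rg a x -> Rg a y -> Rg a (x - y))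
              /\ (forall x, Rg a x -> R x)),
   (forall a b x y, Rg a x -> Rg b y -> Rg (a + b) (x * y)),
   (forall r, R r -> exists (s : seq G) (c : G -> K),
        [/\ uniq s, (forall a, a \in s -> Rg a (c a)) & r = \sum_(a <- s) c a])
 & (forall (s : seq G) (c : G -> K), uniq s -> (forall a, a \in s -> Rg a (c a)) ->
        \sum_(a <- s) c a = 0 -> forall a, a \in s -> c a = 0)].

Definition hcomp (Rg : G -> pred K) (r : K) : K -> Prop :=
  fun x => exists (s : seq G) (c : G -> K),
    [/\ uniq s, (forall a, a \in s -> Rg a (c a)), r = \sum_(a <- s) c a
      & exists2 a, a \in s & x = c a].

Definition homog (Rg : G -> pred K) : K -> Prop :=
  fun h => h != 0 /\ exists a, Rg a h.

Definition RH (R : pred K) (Rg : G -> pred K) : K -> Prop :=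
  fun x => exists a h, R a /\ homog Rg h /\ x = a / h.

Definition Cont (R : pred K) (Rg : G -> pred K) (r : K) : K -> Prop :=
  span (fun x => R x) (hcomp Rg r).

Definition inRX (R : pred K) (f : {poly K}) : Prop := forall i, R f`_i.

Definition Af (R : pred K) (Rg : G -> pred K) (f : {poly K}) : K -> Prop :=
  span (fun x => R x) (fun x => exists i, hcomp Rg f`_i x).

End Graded.

Section Semistar.
Variable K : fieldType.
Implicit Types (R : pred K) (st : (K -> Prop) -> (K -> Prop)).

Definition Rset R : K -> Prop := fun x => R x.

(* a map on nonzero R-submodules of K (extended arbitrarily to other sets);
   equalities of submodules are stated extensionally *)
Definition semistar R st : Prop :=
  [/\ (forall E, nz_submod (Rset R) E -> nz_submod (Rset R) (st E)),
      (forall x E, x != 0 -> nz_submod (Rset R) E ->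
         sameset (st (scaleset x E)) (scaleset x (st E))),
      (forall E E', nz_submod (Rset R) E -> nz_submod (Rset R) E' ->
         incl E E' -> incl (st E) (st E')),
      (forall E, nz_submod (Rset R) E -> incl E (st E))
    & (forall E, nz_submod (Rset R) E -> sameset (st (st E)) (st E))].

Definition star_f R st (E : K -> Prop) : K -> Prop :=
  fun x => exists s : seq K,
    let Fs := span (Rset R) (fun y => y \in s) in
    [/\ incl Fs E, (exists y, y != 0 /\ Fs y) & st Fs x].

Definition star_f_invertible R st (I : K -> Prop) : Prop :=
  sameset (star_f R st (mulmod (Rset R) I (colon (Rset R) I))) (st (Rset R)).

Definition Nstar (G : nmodType) R (Rg : G -> pred K) st (g : {poly K}) : Prop :=
  [/\ g != 0, inRX R g & sameset (st (Af R Rg g)) (st (Rset R))].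

Notation "x %:F" := (@FracField.tofrac _ x) : ring_scope.

Definition NA (G : nmodType) R (Rg : G -> pred K) st : {fraction {poly K}} -> Prop :=
  fun z => exists p g, [/\ inRX R p, Nstar R Rg st g & z = p%:F / g%:F].

Definition extNA (G : nmodType) R (Rg : G -> pred K) st (I : K -> Prop)
  : {fraction {poly K}} -> Prop :=
  span (NA R Rg st) (fun z => exists2 a, I a & z = (a%:P)%:F).

Definition fNA (G : nmodType) R (Rg : G -> pred K) st (f : {poly K})
  : {fraction {poly K}} -> Prop :=
  scaleset (f%:F) (NA R Rg st).

End Semistar.

From Pilot Require Import Defs.
From HB Require Import structures.
From mathcomp Require Import all_boot all_order all_algebra.
From mathcomp Require Import fraction.
From mathcomp Require Import boolp classical_sets ring zify.

Set Implicit Arguments. Unset Strict Implicit. Unset Printing Implicit Defensive.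
Import GRing.Theory.
Local Open Scope ring_scope.
Local Notation span := Defs.span.
Local Notation "x %:F" := (@FracField.tofrac _ x).

Section ZornAbove.
Local Open Scope classical_set_scope.
Variables (T : Type) (P : set (set T)) (B : set T).

Lemma Zorn_above :
  P B ->
  (forall F, F `<=` P -> total_on F subset -> F !=set0 -> P (\bigcup_(X in F) X)) ->
  exists A, [/\ P A, B `<=` A & forall C, P C -> A `<=` C -> C `<=` A].
Proof.
move=> PB Pchain.
pose P' X := X = set0 \/ (P X /\ B `<=` X).
have [|A [P'A Amax]] := @Zorn_bigcup T P'.
  move=> F FP' Ftot; have [[X0 [FX0 X0n]]|Fempty] := pselect (exists X, F X /\ X <> set0).
    right; pose F' := F `&` [set X | X <> set0].
    have -> : \bigcup_(X in F) X = \bigcup_(X in F') X.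
      apply/seteqP; split => t [X FX Xt]; last by exists X => //; case: FX.
      by exists X => //; split => // X_0; rewrite X_0 in Xt.
    split; last by move=> t Bt; exists X0 => //; case: (FP' X0 FX0) => // -[_]; apply.
    apply: Pchain; last by exists X0.
    - by move=> X [FX Xn]; case: (FP' X FX) => [/Xn|[]].
    - by move=> X Y [FX _] [FY _]; apply: Ftot.
  left; apply/seteqP; split => t // [X FX Xt].
  by case: Fempty; exists X; split => // X_0; rewrite X_0 in Xt.
have [A0|[PA BA]] := P'A.
  have [[b Bb]|B0] := pselect (B !=set0).
    by exfalso; apply: (Amax B); [by rewrite A0; split => // /(_ b Bb) | by right; split].
  exists B; split => // C PC _ t Ct; apply: contrapT => _.
  apply: (Amax C); first by rewrite A0; split => // /(_ t Ct).
  by right; split => // x Bx; case: B0; exists x.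
exists A; split => // C PC AC t Ct; apply: contrapT => At.
apply: (Amax C); last by right; split => // x /BA /AC.
by split => // /(_ t Ct).
Qed.

End ZornAbove.

Section MonoidOrder.
Local Open Scope classical_set_scope.
Variable G : nmodType.

Definition monoid_order (le : set (G * G)) :=
  [/\ forall a, le (a, a),
      forall a b c, le (a, b) -> le (b, c) -> le (a, c),
      forall a b, le (a, b) -> le (b, a) -> a = b,
      forall a b c, le (a + c, b + c) <-> le (a, b)
    & forall n a b, le (a *+ n.+1, b *+ n.+1) -> le (a, b)].

Section MonoidOrderTheory.
Variables (le : set (G * G)) (hle : monoid_order le).

Lemma mo_refl a : le (a, a). Proof. by case: hle. Qed.
Lemma mo_trans a b c : le (a, b) -> le (b, c) -> le (a, c). Proof. by case: hle => _ h _ _ _; exact: h. Qed.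
Lemma mo_anti a b : le (a, b) -> le (b, a) -> a = b. Proof. by case: hle => _ _ h _ _; exact: h. Qed.
Lemma mo_addr a b c : le (a, b) -> le (a + c, b + c). Proof. by case: hle => _ _ _ h _ ?; apply/h. Qed.
Lemma mo_addrK a b c : le (a + c, b + c) -> le (a, b). Proof. by case: hle => _ _ _ h _ /h. Qed.
Lemma mo_mulrnK n a b : le (a *+ n.+1, b *+ n.+1) -> le (a, b). Proof. by case: hle => _ _ _ _; apply. Qed.

Lemma mo_addl a b c : le (a, b) -> le (c + a, c + b).
Proof. by rewrite ![c + _]addrC; apply: mo_addr. Qed.

Lemma mo_add a b c d : le (a, b) -> le (c, d) -> le (a + c, b + d).
Proof. by move=> /(mo_addr c) h1 /(mo_addl b); apply: mo_trans. Qed.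

Lemma mo_mulrn n a b : le (a, b) -> le (a *+ n, b *+ n).
Proof.
move=> h; elim: n => [|n IH]; first by rewrite !mulr0n; apply: mo_refl.
by rewrite !mulrS; apply: mo_add.
Qed.

End MonoidOrderTheory.

Section AdjoinComparison.
Variables (le : set (G * G)) (hle : monoid_order le) (a b : G).
Hypothesis nba : ~ le (b, a).

(* [(x, y)] is in the extension iff [(n+1)(x - y) <= m (a - b)] in the quotient
   group for some [n, m]: the least monoid order containing [le] and [(a, b)]. *)
Definition adjoin_le : set (G * G) :=
  fun p => exists n m, le (p.1 *+ n.+1 + b *+ m, p.2 *+ n.+1 + a *+ m).

Lemma adjoin_le_ext p : le p -> adjoin_le p.
Proof. by case: p => x y h; exists 0%N, 0%N; rewrite /= !mulr0n !addr0 !mulr1n. Qed.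

Lemma adjoin_le_ab : adjoin_le (a, b).
Proof. by exists 0%N, 1%N; rewrite /= !mulr1n addrC; apply: mo_refl. Qed.

Lemma adjoin_le_cross x y z n m n' m' :
  le (x *+ n.+1 + b *+ m, y *+ n.+1 + a *+ m) ->
  le (y *+ n'.+1 + b *+ m', z *+ n'.+1 + a *+ m') ->
  le (x *+ (n.+1 * n'.+1) + b *+ (m * n'.+1 + m' * n.+1),
      z *+ (n.+1 * n'.+1) + a *+ (m * n'.+1 + m' * n.+1)).
Proof.
move=> /(mo_mulrn hle n'.+1) h1 /(mo_mulrn hle n.+1) h2.
apply: (mo_addrK hle (c := y *+ (n.+1 * n'.+1))).
have := mo_add hle h1 h2; rewrite !mulrnDl -!mulrnA (mulnC n'.+1 n.+1) !mulrnDr.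
rewrite [X in le (X, _)]addrACA [X in le (X, _)]addrAC.
by rewrite [X in le (_, X)]addrACA [y *+ _ + z *+ _]addrC [X in le (_, X)]addrAC.
Qed.

Lemma monoid_order_adjoin : monoid_order adjoin_le.
Proof.
split.
- by move=> x; exists 0%N, 0%N; apply: mo_refl.
- move=> x y z [n [m h1]] [n' [m' h2]].
  exists (n.+1 * n'.+1).-1, (m * n'.+1 + m' * n.+1).
  by rewrite prednK ?muln_gt0 //; apply: adjoin_le_cross h1 h2.
- move=> x y [n [m h1]] [n' [m' h2]].
  have := adjoin_le_cross h1 h2; rewrite addrC [X in le (_, X)]addrC => /(mo_addrK hle).
  case ek: (m * n'.+1 + m' * n.+1)%N => [|k]; last by move/(mo_mulrnK hle)/nba.
  move=> _.
  move: ek => /eqP; rewrite addn_eq0 !muln_eq0 /= !orbF => /andP[/eqP em /eqP em'].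
  move: h1 h2; rewrite em em' !mulr0n !addr0 => /(mo_mulrnK hle) h1 /(mo_mulrnK hle).
  exact: mo_anti.
- move=> x y c; split=> -[n [m h]]; exists n, m; move: h => /=;
    rewrite !mulrnDl (addrAC (x *+ _)) (addrAC (y *+ _)).
    exact: mo_addrK.
  exact: mo_addr.
- move=> k x y [n [m h]]; exists (k.+1 * n.+1).-1, m.
  by rewrite prednK ?muln_gt0 // !mulrnA.
Qed.
End AdjoinComparison.

Lemma monoid_order_bigcup (F : set (set (G * G))) :
  F `<=` monoid_order -> total_on F subset -> F !=set0 ->
  monoid_order (\bigcup_(X in F) X).
Proof.
move=> Fo Ftot [X0 FX0].
have common p q : (\bigcup_(X in F) X) p -> (\bigcup_(X in F) X) q ->
    exists2 X, F X & X p /\ X q.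
  move=> [X FX Xp] [Y FY Yq]; have [XY|YX] := Ftot X Y FX FY.
    by exists Y => //; split => //; apply: XY.
  by exists X => //; split => //; apply: YX.
split.
- by move=> x; exists X0; last exact: (mo_refl (Fo X0 FX0)).
- move=> x y z /common /[apply] -[X FX [hxy hyz]].
  by exists X; last exact: (mo_trans (Fo X FX) hxy hyz).
- by move=> x y /common /[apply] -[X FX [hxy hyx]]; exact: (mo_anti (Fo X FX) hxy hyx).
- move=> x y c; split=> -[X FX h]; exists X => //.
    exact: (mo_addrK (Fo X FX) h).
  exact: (mo_addr (Fo X FX) c h).
- by move=> k x y [X FX h]; exists X; last exact: (mo_mulrnK (Fo X FX) h).
Qed.

Lemma exists_total_monoid_order : grading_monoid G ->
  exists2 le, monoid_order le & forall a b, le (a, b) \/ le (b, a).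
Proof.
move=> [canc tfree].
have eq_order : monoid_order (fun p : G * G => p.1 = p.2).
  split=> [//|a b c|a b|a b c|n a b].
  - by change (a = b -> b = c -> a = c) => -> ->.
  - by change (a = b -> b = a -> a = b) => ->.
  - by change (a + c = b + c <-> a = b); split => [/canc|->].
  - exact: tfree.
have [le [hle _ le_max]] := Zorn_above eq_order monoid_order_bigcup.
exists le => // x y; have [|nyx] := pselect (le (y, x)); [by right | left].
apply: (le_max _ (monoid_order_adjoin hle nyx)); last exact: adjoin_le_ab.
exact: adjoin_le_ext.
Qed.

End MonoidOrder.

Section MaxSeq.
Variables (G : nmodType) (le : set (G * G)) (hle : monoid_order le).
Hypothesis le_total : forall a b, le (a, b) \/ le (b, a).

Lemma exists_max_seq (s : seq G) : s != [::] ->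
  exists2 a, a \in s & forall b, b \in s -> le (b, a).
Proof.
elim: s => [//|x s IH] _; have [->|/IH[a sa amax]] := eqVneq s [::].
  by exists x; rewrite ?mem_seq1 // => b; rewrite mem_seq1 => /eqP ->; apply: mo_refl.
have [xa|ax] := le_total x a.
  by exists a; [rewrite inE sa orbT | move=> b; rewrite inE => /orP[/eqP ->|/amax]].
exists x; first by rewrite inE eqxx.
by move=> b; rewrite inE => /orP[/eqP ->|/amax ba]; [apply: mo_refl | apply: mo_trans ba ax].
Qed.

Lemma mo_add_eq : cancellative G -> forall a b a0 b0,
  le (a, a0) -> le (b, b0) -> a + b = a0 + b0 -> a = a0 /\ b = b0.
Proof.
move=> canc a b a0 b0 aa0 bb0 e.
have /(mo_anti hle (mo_addl hle a0 bb0)) : le (a0 + b0, a0 + b) by rewrite -e; apply: mo_addr.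
rewrite ![a0 + _]addrC => /canc eb; split => //.
by move: e; rewrite eb => /canc.
Qed.

End MaxSeq.

Section Span.
Variable F : fieldType.
Implicit Types (S T E : F -> Prop).

Lemma span0 S T : span S T 0.
Proof. by exists [::]; rewrite big_nil. Qed.

Lemma spanD S T x y : span S T x -> span S T y -> span S T (x + y).
Proof.
move=> [s [hs ->]] [t [ht ->]]; exists (s ++ t); rewrite big_cat; split => // p.
by rewrite mem_cat => /orP[/hs|/ht].
Qed.

Lemma spanM S T r x : (forall a b, S a -> S b -> S (a * b)) -> S r ->
  span S T x -> span S T (r * x).
Proof.
move=> SM Sr [s [hs ->]]; exists [seq (r * p.1, p.2) | p <- s]; split.
  by move=> q /mapP [p ps ->] /=; case: (hs p ps) => h1 h2; split => //; apply: SM.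
by rewrite big_map mulr_sumr; apply: eq_bigr => p _; rewrite mulrA.
Qed.

Lemma span_gen S T x : S 1 -> T x -> span S T x.
Proof.
by move=> S1 Tx; exists [:: (1, x)]; rewrite big_seq1 mul1r; split => // p /[1!inE] /eqP ->.
Qed.

Lemma span_ind S T E : E 0 -> (forall x y, E x -> E y -> E (x + y)) ->
  (forall r x, S r -> T x -> E (r * x)) -> incl (span S T) E.
Proof.
move=> E0 ED EM x [s [hs ->]]; rewrite big_seq; apply: big_ind => // p /hs[].
exact: EM.
Qed.

Lemma span_mono S T T' : incl T T' -> incl (span S T) (span S T').
Proof.
by move=> TT' x [s [hs ->]]; exists s; split => // p /hs[? /TT'].
Qed.

Lemma submod_span S T : (forall a b, S a -> S b -> S (a * b)) -> submod S (span S T).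
Proof.
by move=> SM; split; [exact: span0 | split => [x y|r x Sr]; [exact: spanD | exact: spanM]].
Qed.


Lemma span_prodset_seq S I C (s : seq F) : S 1 -> (forall a b, S a -> S b -> S (a * b)) ->
  (forall x, x \in s -> span S (prodset I C) x) ->
  exists2 bs : seq F, (forall b, b \in bs -> C b) &
    forall x, x \in s -> span S (prodset I (fun b => b \in bs)) x.
Proof.
move=> S1 SM; pose P (bs : seq F) := prodset I (fun b => b \in bs).
have P_cat (bs bs' : seq F) : incl (span S (P bs)) (span S (P (bs ++ bs'))) /\
                    incl (span S (P bs')) (span S (P (bs ++ bs'))).
  by split; apply: span_mono => _ [x [b [Ix [bs_b ->]]]]; exists x, b; rewrite mem_cat bs_b ?orbT.
have one : incl (span S (prodset I C))
    (fun x => exists2 bs, (forall b, b \in bs -> C b) & span S (P bs) x).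
  apply: span_ind; first by exists [::]; last exact: span0.
    move=> u v [bs Cbs ubs] [bs' Cbs' vbs']; exists (bs ++ bs').
      by move=> b /[1!mem_cat] /orP[/Cbs|/Cbs'].
    by have [h h'] := P_cat bs bs'; apply: spanD (h _ ubs) (h' _ vbs').
  move=> r _ Sr [x [b [Ix [Cb ->]]]]; exists [:: b]; first by move=> b' /[1!inE] /eqP ->.
  by apply: spanM SM Sr (span_gen S1 _); exists x, b; rewrite inE eqxx.
elim: s => [|x s IH] sJ; first by exists [::].
have [|bs Cbs sbs] := IH; first by move=> y ys; apply: sJ; rewrite inE ys orbT.
have [bs' Cbs' xbs'] := one x (sJ x (mem_head _ _)).
exists (bs ++ bs'); first by move=> b /[1!mem_cat] /orP[/Cbs|/Cbs'].
have [h h'] := P_cat bs bs'; move=> y; rewrite inE => /orP[/eqP ->|/sbs /h //]; exact: h' _ xbs'.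
Qed.

End Span.

Section Ideals.
Variable F : fieldType.
Implicit Types (R Q : F -> Prop).

Definition subring R :=
  [/\ R 1, forall x y, R x -> R y -> R (x - y) & forall x y, R x -> R y -> R (x * y)].

Definition ideal R Q :=
  [/\ incl Q R, Q 0, forall x y, Q x -> Q y -> Q (x + y)
    & forall r x, R r -> Q x -> Q (r * x)].

Definition prime_ideal R Q :=
  ideal R Q /\ forall x y, R x -> R y -> Q (x * y) -> Q x \/ Q y.

Section SubringTheory.
Variables (R : F -> Prop) (HR : subring R).

Lemma subring1 : R 1. Proof. by case: HR. Qed.
Lemma subringB x y : R x -> R y -> R (x - y). Proof. by case: HR => _ h _; apply: h. Qed.
Lemma subringM x y : R x -> R y -> R (x * y). Proof. by case: HR => _ _; apply. Qed.
Lemma subring0 : R 0. Proof. by rewrite -(subrr 1); apply: subringB subring1 subring1. Qed.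
Lemma subringN x : R x -> R (- x). Proof. by rewrite -sub0r; apply: subringB subring0. Qed.
Lemma subringD x y : R x -> R y -> R (x + y).
Proof. by move=> Rx Ry; rewrite -[y]opprK; apply: subringB (subringN Ry). Qed.
Lemma subring_sum I (s : seq I) (P : pred I) (f : I -> F) :
  (forall i, P i -> R (f i)) -> R (\sum_(i <- s | P i) f i).
Proof. exact: (big_ind R subring0 subringD). Qed.

Lemma ideal_self : ideal R R.
Proof. by split => //; [exact: subring0 | exact: subringD | exact: subringM]. Qed.

Lemma mulmod_colon_sub I : incl (mulmod R I (colon R I)) R.
Proof.
apply: span_ind; [exact: subring0 | exact: subringD |].
by move=> r _ Rr [x [y [Ix [cy ->]]]]; apply: subringM => //; rewrite mulrC; apply: cy.
Qed.

Lemma invertible_principal I f : f != 0 -> sameset I (scaleset f R) -> invertible R I.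
Proof.
move=> f_nz If x; split; first exact: mulmod_colon_sub.
move=> Rx; rewrite -[x]mulr1 -(divff f_nz); apply: spanM subringM Rx _.
apply: span_gen subring1 _; exists f, f^-1; split; first by apply/If; exists 1; rewrite mulr1; split => //; apply: subring1.
by split => // y /If[z [Rz ->]]; rewrite mulrA mulVf ?mul1r.
Qed.

End SubringTheory.

Section IdealTheory.
Variables (R Q : F -> Prop) (HR : subring R) (HQ : ideal R Q).

Lemma ideal_sub x : Q x -> R x. Proof. by case: HQ => h _ _ _; apply: h. Qed.
Lemma ideal0 : Q 0. Proof. by case: HQ. Qed.
Lemma idealD x y : Q x -> Q y -> Q (x + y). Proof. by case: HQ => _ _ h _; apply: h. Qed.
Lemma ideal_mull r x : R r -> Q x -> Q (r * x). Proof. by case: HQ => _ _ _; apply. Qed.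
Lemma ideal_mulr r x : R r -> Q x -> Q (x * r). Proof. by rewrite mulrC; apply: ideal_mull. Qed.
Lemma idealN x : Q x -> Q (- x).
Proof. by rewrite -mulN1r; apply: ideal_mull (subringN HR (subring1 HR)). Qed.
Lemma ideal_submod : submod R Q.
Proof. by case: HQ => _ Q0 QD QM; split. Qed.

Lemma ideal_sum I (s : seq I) (P : pred I) (f : I -> F) :
  (forall i, P i -> Q (f i)) -> Q (\sum_(i <- s | P i) f i).
Proof. exact: (big_ind Q ideal0 idealD). Qed.

End IdealTheory.
End Ideals.

Section PolyCoefs.
Variable F : fieldType.

Definition coefs_in (Q : F -> Prop) (p : {poly F}) := forall i, Q p`_i.

Variables (R Q : F -> Prop) (HQ : ideal R Q).

Lemma coefs_in_mull p q : coefs_in R p -> coefs_in Q q -> coefs_in Q (p * q).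
Proof. by move=> Rp Qq i; rewrite coefM; apply: (ideal_sum HQ) => k _; apply: (ideal_mull HQ). Qed.

Lemma coefs_in_mulr p q : coefs_in Q p -> coefs_in R q -> coefs_in Q (p * q).
Proof. by move=> Qp Rq; rewrite mulrC; apply: coefs_in_mull. Qed.

Lemma coefs_in_first_out p : ~ coefs_in Q p ->
  exists i, ~ Q p`_i /\ forall j, (j < i)%N -> Q p`_j.
Proof.
move=> /existsNP ex; have /ex_minnP[i /asboolP ni imin] : exists i, `[< ~ Q p`_i >].
  by case: ex => i ni; exists i; apply/asboolP.
exists i; split => // j ji; apply: contrapT => nj.
by have := imin j (asboolT nj); rewrite leqNgt ji.
Qed.

Hypotheses (HR : subring R) (Qprime : forall x y, R x -> R y -> Q (x * y) -> Q x \/ Q y).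

Lemma coefs_in_prime p q : coefs_in R p -> coefs_in R q ->
  ~ coefs_in Q p -> ~ coefs_in Q q -> ~ coefs_in Q (p * q).
Proof.
move=> Rp Rq /coefs_in_first_out[i [ni imin]] /coefs_in_first_out[j [nj jmin]] Qpq.
have ij : (i < (i + j).+1)%N by rewrite ltnS leq_addr.
have := Qpq (i + j)%N; rewrite coefM (bigD1 (Ordinal ij)) //= addKn.
set rest := (X in _ + X) => Qsum.
have Qrest : Q rest.
  apply: (ideal_sum HQ) => k; rewrite -(inj_eq val_inj) /= => ki.
  have [lt_ki|gt_ki] := ltnP k i; first exact: (ideal_mulr HQ (Rq _) (imin _ lt_ki)).
  apply: (ideal_mull HQ (Rp _) (jmin _ _)); move: ki gt_ki (ltn_ord k); lia.
have Qij : Q (p`_i * q`_j) by rewrite -[_ * _](addrK rest); apply: (idealD HQ Qsum (idealN HR HQ Qrest)).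
by have [] := Qprime (Rp i) (Rq j) Qij.
Qed.

End PolyCoefs.

Section Semistar.
Variables (K : fieldType) (R : pred K) (st : (K -> Prop) -> K -> Prop).
Hypotheses (HR : subring (Rset R)) (Hst : semistar R st).
Local Notation Rs := (Rset R).
Local Notation sf := (star_f R st).

Lemma nz_submod_R : nz_submod Rs Rs.
Proof.
split; last by exists 1; rewrite oner_eq0; split => //; apply: (subring1 HR).
split; first exact: subring0 HR.
by split => [x y|r x]; [apply: (subringD HR) | apply: (subringM HR)].
Qed.

Lemma nz_submod_span (T : K -> Prop) : (exists y, y != 0 /\ span Rs T y) ->
  nz_submod Rs (span Rs T).
Proof. by split => //; apply/submod_span/(subringM HR). Qed.

Lemma nz_submod_scale e E : e != 0 -> nz_submod Rs E -> nz_submod Rs (scaleset e E).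
Proof.
move=> e_nz [[E0 [ED EM]] [y [y_nz Ey]]]; split; last first.
  by exists (e * y); rewrite mulf_neq0 //; split => //; exists y.
split; first by exists 0; rewrite mulr0.
split => [x z [x' [Ex' ->]] [z' [Ez' ->]]|r x Rr [x' [Ex' ->]]].
  by exists (x' + z'); rewrite mulrDr; split => //; apply: ED.
by exists (r * x'); rewrite mulrCA; split => //; apply: EM.
Qed.

Lemma st_nz E : nz_submod Rs E -> nz_submod Rs (st E). Proof. by case: Hst => h _ _ _ _; apply: h. Qed.
Lemma st_scale x E : x != 0 -> nz_submod Rs E -> sameset (st (scaleset x E)) (scaleset x (st E)).
Proof. by case: Hst => _ h _ _ _; apply: h. Qed.
Lemma st_mono E E' : nz_submod Rs E -> nz_submod Rs E' -> incl E E' -> incl (st E) (st E').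
Proof. by case: Hst => _ _ h _ _; apply: h. Qed.
Lemma st_ext E : nz_submod Rs E -> incl E (st E). Proof. by case: Hst => _ _ _ h _; apply: h. Qed.
Lemma st_idem E : nz_submod Rs E -> sameset (st (st E)) (st E). Proof. by case: Hst => _ _ _ _ h; apply: h. Qed.

Lemma st_R1 : st Rs 1.
Proof. by apply: (st_ext nz_submod_R); apply: (subring1 HR). Qed.

Lemma st_eq_R E : nz_submod Rs E -> incl E Rs -> st E 1 -> sameset (st E) (st Rs).
Proof.
move=> nzE ER stE1 x; split; first exact: st_mono nz_submod_R ER x.
have [[_ [_ stEM]] _] := st_nz nzE.
have R_stE : incl Rs (st E) by move=> r Rr; rewrite -[r]mulr1; apply: stEM.
by move=> /(st_mono nz_submod_R (st_nz nzE) R_stE) /(st_idem nzE).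
Qed.

Lemma star_f_mono E E' : incl E E' -> incl (sf E) (sf E').
Proof. by move=> EE' x [s [sE nz stx]]; exists s; split => // y /sE /EE'. Qed.

Lemma star_f_sub_st E : nz_submod Rs E -> incl (sf E) (st E).
Proof. by move=> nzE x [s [sE nz]]; apply: st_mono (nz_submod_span nz) nzE sE x. Qed.

Lemma star_f_sub_R E : incl E Rs -> incl (sf E) (st Rs).
Proof.
move=> ER x [s [sE nz stx]]; apply: (st_mono (nz_submod_span nz) nz_submod_R) stx => y.
by move/sE/ER.
Qed.

Lemma star_f_eq_R E : incl E Rs -> sf E 1 -> sameset (sf E) (st Rs).
Proof.
move=> ER [s [sE nz st1]] x; split; first exact: star_f_sub_R.
move=> stx; exists s; split => //; apply/(st_eq_R (nz_submod_span nz)) => // y.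
by move/sE/ER.
Qed.

Lemma star_f1_of_1 E : submod Rs E -> E 1 -> sf E 1.
Proof.
move=> [E0 [ED EM]] E1; have span1 : span Rs (fun y => y \in [:: 1]) 1.
  exact: span_gen (subring1 HR) (mem_head _ _).
have nz1 : nz_submod Rs (span Rs (fun y => y \in [:: 1])).
  by apply: nz_submod_span; exists 1; rewrite oner_eq0.
exists [:: 1]; split; [|by exists 1; rewrite oner_eq0 | exact: st_ext nz1 _ span1].

by apply: (span_ind E0 ED) => r y Rr; rewrite inE => /eqP ->; apply: EM.
Qed.

Lemma span_allpairs_mul (s t : seq K) e y :
  span Rs (fun z => z \in s) e -> span Rs (fun z => z \in t) y ->
  span Rs (fun z => z \in [seq u * v | u <- s, v <- t]) (e * y).
Proof.
move=> se ty; pose P := span Rs (fun z => z \in [seq u * v | u <- s, v <- t]).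
have spanM := spanM (subringM HR).
have Pu u : u \in s -> P (u * y).
  move=> us; move: y ty; apply: (span_ind (E := fun y => P (u * y))); rewrite ?mulr0.
  - exact: span0.
  - by move=> v w; rewrite mulrDr; apply: spanD.
  - move=> r v Rr vt; rewrite mulrCA; apply: spanM => //.
    exact: span_gen (subring1 HR) (allpairs_f _ us vt).
move: e se; apply: (span_ind (E := fun e => P (e * y))); rewrite ?mul0r.
- exact: span0.
- by move=> u v; rewrite mulrDl; apply: spanD.
- by move=> r u Rr us; rewrite -mulrA; apply: spanM => //; apply: Pu.
Qed.

Lemma star_f_mulmod1 E E' : sf E 1 -> sf E' 1 -> sf (mulmod Rs E E') 1.
Proof.
move=> [s [sE [e0 [e0_nz se0]] st1]] [t [tE' [y0 [y0_nz ty0]] st1']].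
pose F0 := span Rs (fun z => z \in s); pose F1 := span Rs (fun z => z \in t).
pose P := span Rs (fun z => z \in [seq u * v | u <- s, v <- t]).
have nzP : nz_submod Rs P.
  by apply: nz_submod_span; exists (e0 * y0); rewrite mulf_neq0 //; split => //; apply: span_allpairs_mul.
have nzF0 : nz_submod Rs F0 by apply: nz_submod_span; exists e0.
have nzF1 : nz_submod Rs F1 by apply: nz_submod_span; exists y0.
have F0_stP : incl F0 (st P).
  move=> e se; have [->|e_nz] := eqVneq e 0; first by case: (st_nz nzP) => -[].
  have eF1P : incl (scaleset e F1) P by move=> z [y [ty ->]]; apply: span_allpairs_mul.
  apply: (st_mono (nz_submod_scale e_nz nzF1) nzP eF1P).
  by apply/(st_scale e_nz nzF1); exists 1; rewrite mulr1.
exists [seq u * v | u <- s, v <- t]; split.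
- apply: span_ind => [|u v|r z Rr /allpairsP[[u v] [us vt ->]]]; first exact: span0.
    exact: spanD.
  apply: (spanM (subringM HR)) => //; apply: span_gen (subring1 HR) _.
  exists u, v; split; first by apply/sE/span_gen/us/(subring1 HR).
  by split => //; apply/tE'/span_gen/vt/(subring1 HR).
- by case: nzP.
- by apply/(st_idem nzP); apply: (st_mono nzF0 (st_nz nzP) F0_stP).
Qed.

End Semistar.

Lemma big_pred1_uniq (T : eqType) (V : nmodType) (r : seq T) (i : T) (F : T -> V) :
  uniq r -> \sum_(j <- r | j == i) F j = if i \in r then F i else 0.
Proof.
move=> ur; rewrite -big_filter; case: ifP => ir; first by rewrite filter_pred1_uniq // big_seq1.
by rewrite big1_seq // => j /andP[_]; rewrite mem_filter => /andP[/eqP ->]; rewrite ir.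
Qed.

Section GradedDomain.
Variables (G : nmodType) (K : fieldType) (R : pred K) (Rg : G -> pred K).
Hypotheses (HG : grading_monoid G) (HR : graded_domain R Rg).

Lemma grading_addrI (c : G) : injective (+%R c).
Proof. by case: HG => canc _ a b; rewrite /= ![c + _]addrC => /canc. Qed.

Lemma graded_subring : subring (Rset R).
Proof. by case: HR => -[R1 RB RM _] _; split. Qed.

Lemma R0 : R 0. Proof. exact: (subring0 graded_subring). Qed.
Lemma R1 : R 1. Proof. exact: (subring1 graded_subring). Qed.
Lemma RD x y : R x -> R y -> R (x + y). Proof. exact: (subringD graded_subring). Qed.
Lemma RM x y : R x -> R y -> R (x * y). Proof. exact: (subringM graded_subring). Qed.
Lemma R_sum I (s : seq I) (P : pred I) (f : I -> K) :
  (forall i, P i -> R (f i)) -> R (\sum_(i <- s | P i) f i).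
Proof. exact: (subring_sum graded_subring). Qed.

Lemma Rg0 a : Rg a 0. Proof. by case: HR => _ [/(_ a)[]]. Qed.
Lemma RgB a x y : Rg a x -> Rg a y -> Rg a (x - y).
Proof. by move=> hx hy; case: HR => _ [/(_ a)[_ [hB _]] _ _ _]; apply: hB. Qed.
Lemma Rg_sub a x : Rg a x -> R x.
Proof. by case: HR => _ [/(_ a)[_ [_ hR]] _ _ _]; apply: hR. Qed.
Lemma RgM a b x y : Rg a x -> Rg b y -> Rg (a + b) (x * y).
Proof. by case: HR => _ [_ RgM _ _]; apply: RgM. Qed.
Lemma RgD a x y : Rg a x -> Rg a y -> Rg a (x + y).
Proof. by move=> hx hy; have := RgB hx (RgB (Rg0 a) hy); rewrite sub0r opprK. Qed.
Lemma Rg_sum a I (s : seq I) (P : pred I) (f : I -> K) :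
  (forall i, P i -> Rg a (f i)) -> Rg a (\sum_(i <- s | P i) f i).
Proof. exact: (big_ind (Rg a) (Rg0 a) (@RgD a)). Qed.

Lemma graded_decomposition r : R r -> exists s : seq G, exists c : G -> K,
  [/\ uniq s, forall a, a \in s -> Rg a (c a) & r = \sum_(a <- s) c a].
Proof. by case: HR => _ [_ _ + _]; apply. Qed.

Lemma graded_independence (s : seq G) (c : G -> K) : uniq s ->
  (forall a, a \in s -> Rg a (c a)) -> \sum_(a <- s) c a = 0 ->
  forall a, a \in s -> c a = 0.
Proof. by case: HR => _ [_ _ _]; apply. Qed.


Lemma graded_decomposition_ex r : exists sc : seq G * (G -> K), R r ->
  [/\ uniq sc.1, forall a, a \in sc.1 -> Rg a (sc.2 a) & r = \sum_(a <- sc.1) sc.2 a].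
Proof.
have [/graded_decomposition[s [c hsc]]|nRr] := pselect (R r); first by exists (s, c).
by exists ([::], fun=> 0).
Qed.

Definition decomp r := proj1_sig (cid (graded_decomposition_ex r)).
Definition supp r := (decomp r).1.
Definition comp r a := if a \in supp r then (decomp r).2 a else 0.

Lemma decompP r : R r ->
  [/\ uniq (supp r), forall a, a \in supp r -> Rg a ((decomp r).2 a)
     & r = \sum_(a <- supp r) (decomp r).2 a].
Proof. exact: (proj2_sig (cid (graded_decomposition_ex r))). Qed.

Lemma big_if_mem (s u : seq G) (c : G -> K) : uniq s -> uniq u -> {subset s <= u} ->
  \sum_(a <- u) (if a \in s then c a else 0) = \sum_(a <- s) c a.
Proof.
move=> us uu su; rewrite -big_mkcond -big_filter; apply: perm_big.
apply: uniq_perm; [exact: filter_uniq | by [] | move=> a].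
by rewrite mem_filter; case: (boolP (a \in s)) => //= /su ->.
Qed.

Lemma decomp_unique (s s' : seq G) (c c' : G -> K) : uniq s -> uniq s' ->
  (forall a, a \in s -> Rg a (c a)) -> (forall a, a \in s' -> Rg a (c' a)) ->
  \sum_(a <- s) c a = \sum_(a <- s') c' a ->
  forall a, (if a \in s then c a else 0) = (if a \in s' then c' a else 0).
Proof.
move=> us us' hc hc' e a; pose u := undup (s ++ s').
have uu : uniq u by apply: undup_uniq.
have su b : b \in s -> b \in u by rewrite mem_undup mem_cat => ->.
have s'u b : b \in s' -> b \in u by rewrite mem_undup mem_cat orbC => ->.
pose d b := (if b \in s then c b else 0) - (if b \in s' then c' b else 0).
have hd b : b \in u -> Rg b (d b).
  by move=> _; apply: RgB; case: ifP => h; rewrite ?Rg0 ?hc ?hc'.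
have sd : \sum_(b <- u) d b = 0 by rewrite sumrB !big_if_mem // e subrr.
have [au|] := boolP (a \in u); first by apply/eqP; rewrite -subr_eq0; apply/eqP; apply: (graded_independence uu hd sd).
by rewrite mem_undup mem_cat negb_or => /andP[/negbTE -> /negbTE ->].
Qed.

Lemma compP r : R r -> [/\ uniq (supp r), forall a, Rg a (comp r a),
  r = \sum_(a <- supp r) comp r a & forall a, a \notin supp r -> comp r a = 0].
Proof.
move=> Rr; have [us hc e] := decompP Rr; split => //.
- by move=> a; rewrite /comp; case: ifP => [/hc|_]; rewrite ?Rg0.
- by rewrite {1}e; apply: eq_big_seq => a sa; rewrite /comp sa.
- by move=> a; rewrite /comp => /negbTE ->.
Qed.

Lemma comp_homog r a : R r -> Rg a (comp r a). Proof. by case/compP. Qed.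

Lemma comp_unique r (s : seq G) (c : G -> K) : uniq s -> (forall a, a \in s -> Rg a (c a)) ->
  r = \sum_(a <- s) c a -> forall a, comp r a = if a \in s then c a else 0.
Proof.
move=> us hc e a.
have Rr : R r by rewrite e big_seq; apply: R_sum => b /hc /Rg_sub.
have [us' hc' e'] := decompP Rr.
by apply: (decomp_unique us' us hc' hc _ a); rewrite -e -e'.
Qed.

Lemma comp_big (I : eqType) (L : seq I) (deg : I -> G) (h : I -> K) :
  (forall i, Rg (deg i) (h i)) ->
  forall a, comp (\sum_(i <- L) h i) a = \sum_(i <- L | deg i == a) h i.
Proof.
move=> hh a; pose s := undup (map deg L); pose c b := \sum_(i <- L | deg i == b) h i.
have us : uniq s by apply: undup_uniq.
have hc b : b \in s -> Rg b (c b) by move=> _; apply: Rg_sum => i /eqP <-.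
have e : \sum_(i <- L) h i = \sum_(b <- s) c b.
  rewrite /c (exchange_big_dep xpredT) //=; apply: eq_big_seq => i iL.
  by under eq_bigl do rewrite eq_sym; rewrite big_pred1_uniq // mem_undup map_f.
rewrite (comp_unique us hc e) /c; case: ifP => // /negbT sa.
by rewrite big1_seq // => i /andP[/eqP di iL]; case/negP: sa; rewrite mem_undup -di map_f.
Qed.

Lemma comp_of_homog b x a : Rg b x -> comp x a = if a == b then x else 0.
Proof.
move=> hx; rewrite (@comp_unique x [:: b] (fun=> x)) ?big_seq1 ?inE //.
by move=> c /[1!inE] /eqP ->.
Qed.

Lemma comp0 a : comp 0 a = 0.
Proof. by rewrite (comp_of_homog a (Rg0 a)); case: ifP. Qed.

Lemma sum_comp x (u : seq G) : R x -> uniq u -> {subset supp x <= u} ->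
  \sum_(a <- u) comp x a = x.
Proof.
move=> Rx uu su; have [us _ e out] := compP Rx.
rewrite [RHS]e -(big_if_mem _ us uu su); apply: eq_bigr => a _.
by case: ifP => // /negbT /out.
Qed.

Lemma compD x y a : R x -> R y -> comp (x + y) a = comp x a + comp y a.
Proof.
move=> Rx Ry; pose u := undup (supp x ++ supp y).
have uu : uniq u by apply: undup_uniq.
have xu b : b \in supp x -> b \in u by rewrite mem_undup mem_cat => ->.
have yu b : b \in supp y -> b \in u by rewrite mem_undup mem_cat orbC => ->.
rewrite (@comp_unique (x + y) u (fun a => comp x a + comp y a)) //.
- case: ifP => // /negbT au; have [_ _ _ outx] := compP Rx; have [_ _ _ outy] := compP Ry.
  by rewrite outx ?outy ?addr0 //; apply: contra au; [apply: yu | apply: xu].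
- by move=> b _; apply: RgD; apply: comp_homog.
- by rewrite big_split /= !sum_comp.
Qed.

Lemma comp_mul_homog_ex b t y c : Rg b t -> R y ->
  exists2 r, R r & comp (t * y) c = t * r.
Proof.
move=> ht Ry; have [uy hc ey _] := compP Ry.
have -> : t * y = \sum_(a <- supp y) t * comp y a by rewrite {1}ey mulr_sumr.
rewrite (@comp_big _ _ (fun a => b + a) (fun a => t * comp y a)); last by move=> a; apply: RgM.
exists (\sum_(a <- supp y | b + a == c) comp y a); last by rewrite mulr_sumr.
by apply: R_sum => a _; apply: Rg_sub (hc a).
Qed.

Lemma comp_mul_homog b t y a : Rg b t -> R y -> comp (t * y) (b + a) = t * comp y a.
Proof.
move=> ht Ry; have [uy hc ey out] := compP Ry.
have -> : t * y = \sum_(a' <- supp y) t * comp y a' by rewrite {1}ey mulr_sumr.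
rewrite (@comp_big _ _ (fun a' => b + a') (fun a' => t * comp y a')); last by move=> a'; apply: RgM.
under eq_bigl => a' do rewrite (inj_eq (@grading_addrI b)).
by rewrite big_pred1_uniq //; case: ifP => // /negbT /out ->; rewrite mulr0.
Qed.


Definition is_homog x := exists a, Rg a x.

Lemma Rg_1 : Rg 0 1.
Proof.
have [_ hc e _] := compP R1.
have [a0 nz_a0] : exists a0, comp 1 a0 != 0.
  apply: contrapT => /forallNP nz; move: e; rewrite big1 => [/eqP|a _]; first by rewrite oner_eq0.
  by have := nz a; case: eqP.
have {}comp1 a : a != 0 -> comp 1 a = 0.
  move=> a_nz; have := comp_mul_homog a (hc a0) R1; rewrite mulr1 (comp_of_homog _ (hc a0)).
  case: ifP => [/eqP|_ /esym/eqP]; last by rewrite mulf_eq0 (negbTE nz_a0) => /eqP.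
  by rewrite -{2}(addr0 a0) => /grading_addrI/eqP; rewrite (negbTE a_nz).
rewrite e; apply: Rg_sum => a _; have [->|/comp1 ->] := eqVneq a 0; [exact: hc | exact: Rg0].
Qed.

Lemma is_homog_factor d c t y : Rg d t -> t != 0 -> R y -> Rg c (t * y) -> is_homog y.
Proof.
move=> ht t_nz Ry hty; have [uy hcy ey out] := compP Ry.
have comp_y a : d + a != c -> comp y a = 0.
  move=> dac; have := comp_mul_homog a ht Ry; rewrite (comp_of_homog _ hty) (negbTE dac).
  by move/esym/eqP; rewrite mulf_eq0 (negbTE t_nz) => /eqP.
have [[a0 da0]|nodeg] := pselect (exists a0, d + a0 = c).
  exists a0; rewrite ey; apply: Rg_sum => a _; have [->//|a_ne] := eqVneq a a0.
  by rewrite comp_y ?Rg0 // -da0 (inj_eq (@grading_addrI d)).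
exists 0; rewrite ey; apply: Rg_sum => a _.
by rewrite comp_y ?Rg0 //; apply/eqP => dac; apply: nodeg; exists a.
Qed.


Lemma comp_mul_top (le : set (G * G)) x y (sx sy : seq G) a0 b0 :
  monoid_order le -> R x -> R y -> uniq sx -> uniq sy -> a0 \in sx -> b0 \in sy ->
  (forall a, a \in sx -> le (a, a0)) -> (forall b, b \in sy -> le (b, b0)) ->
  comp ((\sum_(a <- sx) comp x a) * (\sum_(b <- sy) comp y b)) (a0 + b0)
    = comp x a0 * comp y b0.
Proof.
move=> hle Rx Ry usx usy a0x b0y a0max b0max.
pose L := [seq (a, b) | a <- sx, b <- sy].
have uL : uniq L by apply: allpairs_uniq => // -[? ?] [? ?] _ _ [-> ->].
have -> : (\sum_(a <- sx) comp x a) * (\sum_(b <- sy) comp y b) =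
    \sum_(p <- L) comp x p.1 * comp y p.2 by rewrite big_allpairs big_distrlr.
rewrite (@comp_big _ _ (fun p : G * G => p.1 + p.2)); last first.
  by move=> p; apply: RgM; apply: comp_homog.
rewrite big_seq_cond (eq_bigl (fun p => (p \in L) && (p == (a0, b0)))).
  by rewrite -big_seq_cond big_pred1_uniq // allpairs_f.
move=> [a b] /=; case pL: ((a, b) \in L) => //=.
apply/eqP/eqP => [|[-> ->] //]; have /allpairsP[[a' b'] [ax bx /= [ea eb]]] := pL.
rewrite -ea -eb in ax bx *.
move=> /= e; case: HG => canc _.
by have [-> ->] := mo_add_eq hle canc (a0max a ax) (b0max b bx) e.
Qed.

Definition comp_closed (Q : K -> Prop) := forall x a, Q x -> Q (comp x a).

Section HomogeneousPrime.
Variables (Q : K -> Prop) (HQ : ideal (Rset R) Q) (Qcomp : comp_closed Q).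
Hypothesis Qprime_homog : forall a b x y, Rg a x -> Rg b y -> Q (x * y) -> Q x \/ Q y.

Lemma comp_outside_ideal x : R x -> exists2 s : seq G,
  uniq s /\ (forall a, a \in s -> ~ Q (comp x a)) & Q (x - \sum_(a <- s) comp x a).
Proof.
move=> Rx; have [u _ e _] := compP Rx.
exists [seq a <- supp x | `[< ~ Q (comp x a) >]].
  by split; [exact: filter_uniq | move=> a; rewrite mem_filter => /andP[/asboolP]].
rewrite big_filter {1}e (bigID (fun a => `[< ~ Q (comp x a) >])) /= addrAC subrr add0r.
by apply: (ideal_sum HQ) => a /asboolP /contrapT.
Qed.

Lemma homog_prime x y : R x -> R y -> Q (x * y) -> Q x \/ Q y.
Proof.
move=> Rx Ry Qxy.
have [sx [usx sx_out] Qx] := comp_outside_ideal Rx.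
have [sy [usy sy_out] Qy] := comp_outside_ideal Ry.
set x' := \sum_(a <- sx) _ in Qx; set y' := \sum_(a <- sy) _ in Qy.
have [sx0|sx_nil] := eqVneq sx [::]; first by left; move: Qx; rewrite /x' sx0 big_nil subr0.
have [sy0|sy_nil] := eqVneq sy [::]; first by right; move: Qy; rewrite /y' sy0 big_nil subr0.
have Rx' : R x' by apply: R_sum => a _; apply: Rg_sub (comp_homog _ Rx).
have Qx'y' : Q (x' * y').
  have -> : x' * y' = x * y - y * (x - x') - x' * (y - y') by ring.
  have QN := idealN graded_subring HQ.
  exact: (idealD HQ (idealD HQ Qxy (QN _ (ideal_mull HQ Ry Qx))) (QN _ (ideal_mull HQ Rx' Qy))).
have [le hle le_total] := exists_total_monoid_order HG.
have [a0 a0x a0max] := exists_max_seq hle le_total sx_nil.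
have [b0 b0y b0max] := exists_max_seq hle le_total sy_nil.
have := Qcomp (a0 + b0) Qx'y'; rewrite (comp_mul_top hle) //.
by case/(Qprime_homog (comp_homog _ Rx) (comp_homog _ Ry)) => [/(sx_out _ a0x)|/(sy_out _ b0y)].
Qed.

End HomogeneousPrime.


Section StarPrime.
Variables (st : (K -> Prop) -> K -> Prop) (Hst : semistar R st).
Local Notation Rs := (Rset R).
Local Notation sf := (star_f R st).

(* [~ sf Q 1] encodes [Q^{star_f} <> R^star]. *)
Definition homog_star_prime Q := [/\ prime_ideal Rs Q, comp_closed Q & ~ sf Q 1].

Lemma ideal_span T : incl T Rs -> ideal Rs (span Rs T).
Proof.
move=> TR; split; [|exact: span0|exact: spanD|by move=> r x; apply/spanM/(subringM graded_subring)].
by apply: span_ind => [|x y|r x Rr /TR]; [exact: R0 | exact: RD | exact: RM].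
Qed.

Lemma comp_closed_span T : (forall x, T x -> R x /\ is_homog x) ->
  comp_closed (span Rs T).
Proof.
move=> Thomog x a Tx; suff [_] : R x /\ forall a, span Rs T (comp x a) by apply.
move: x Tx; apply: span_ind.
- by split => [|b]; rewrite ?comp0 ?R0 //; apply: span0.
- move=> x y [Rx cx] [Ry cy]; split => [|b]; first exact: RD.
  by rewrite compD //; apply: spanD.
- move=> r t Rr Tt; have [Rt [d hd]] := Thomog t Tt; split => [|b]; first exact: RM.
  rewrite mulrC; have [r' Rr' ->] := comp_mul_homog_ex b hd Rr; rewrite mulrC.
  exact: spanM (subringM graded_subring) Rr' (span_gen (subring1 graded_subring) Tt).
Qed.

Definition homog_proper Q := [/\ ideal Rs Q, comp_closed Q & ~ sf Q 1].

Lemma homog_proper_bigcup (F : set (set K)) :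
  (F `<=` homog_proper)%classic -> total_on F subset -> (F !=set0)%classic ->
  homog_proper (\bigcup_(X in F) X)%classic.
Proof.
move=> Fp Ftot [X0 FX0]; have Xp X : F X -> ideal Rs X by move/Fp => [].
split; first split.
- by move=> x [X FX]; exact: (ideal_sub (Xp X FX)).
- by exists X0 => //; exact: (ideal0 (Xp X0 FX0)).
- move=> x y [X FX Xx] [Y FY Yy]; have [XY|YX] := Ftot X Y FX FY.
    by exists Y => //; exact: (idealD (Xp Y FY) (XY _ Xx) Yy).
  by exists X => //; exact: (idealD (Xp X FX) Xx (YX _ Yy)).
- by move=> r x Rr [X FX Xx]; exists X => //; exact: (ideal_mull (Xp X FX) Rr Xx).
- by move=> x a [X FX Xx]; exists X => //; have [_ + _] := Fp X FX; apply.
move=> [s [sF nz st1]].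
have [X FX sX] : exists2 X, F X & forall y, y \in s -> X y.
  elim: s sF {nz st1} => [|x s IH] sF; first by exists X0.
  have [|X FX sX] := IH.
    by move=> y sy; apply: sF; apply: (span_mono _ sy) => z zs; rewrite inE zs orbT.
  have [Y FY Yx] : (\bigcup_(X in F) X)%classic x.
    by apply: sF; apply: span_gen (subring1 graded_subring) (mem_head _ _).
  have [XY|YX] := Ftot X Y FX FY.
    by exists Y => // y /[1!inE] /orP[/eqP ->|/sX /XY].
  by exists X => // y /[1!inE] /orP[/eqP ->|/sX]; [apply: YX|].
have [_ _ nX] := Fp X FX; apply: nX; exists s; split => //.
have XX := Xp X FX.
by apply: span_ind => [||r x Rr /sX]; [exact: (ideal0 XX) | exact: (idealD XX) | exact: (ideal_mull XX Rr)].
Qed.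

Definition ideal_addM (Q : K -> Prop) z : K -> Prop :=
  fun w => exists q r, [/\ Q q, R r & w = q + z * r].

Lemma homog_proper_addM Q z c : homog_proper Q -> Rg c z -> ~ sf (ideal_addM Q z) 1 ->
  homog_proper (ideal_addM Q z).
Proof.
move=> [HQ Qcomp _] hz nsf; have Rz := Rg_sub hz; split => //; first split.
- by move=> _ [q [r [Qq Rr ->]]]; exact: (RD (ideal_sub HQ Qq) (RM Rz Rr)).
- by exists 0, 0; rewrite mulr0 addr0; split; [exact: (ideal0 HQ) | exact: R0 |].
- move=> _ _ [q [r [Qq Rr ->]]] [q' [r' [Qq' Rr' ->]]].
  by exists (q + q'), (r + r'); split; [exact: (idealD HQ) | exact: RD | ring].
- move=> s _ Rs_ [q [r [Qq Rr ->]]].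
  by exists (s * q), (s * r); split; [exact: (ideal_mull HQ) | exact: RM | ring].
- move=> _ d [q [r [Qq Rr ->]]].
  rewrite compD; [|exact: (ideal_sub HQ Qq)|exact: (RM Rz Rr)].
  have [r' Rr' ->] := comp_mul_homog_ex d hz Rr.
  by exists (comp q d), r'; split => //; apply: Qcomp.
Qed.

Lemma homog_proper_max_prime Q : homog_proper Q ->
  (forall C, homog_proper C -> incl Q C -> incl C Q) -> homog_star_prime Q.
Proof.
move=> Qp Qmax; have [HQ Qcomp nsfQ] := Qp; split => //; split => //.
apply: homog_prime => // a b x y hx hy Qxy; apply: contrapT => /not_orP[nQx nQy].
have sf_addM z c : Rg c z -> ~ Q z -> sf (ideal_addM Q z) 1.
  move=> hz nQz; apply: contrapT => nsf; apply: nQz.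
  apply: (Qmax _ (homog_proper_addM Qp hz nsf)).
    by move=> q Qq; exists q, 0; rewrite mulr0 addr0; split => //; apply: R0.
  by exists 0, 1; rewrite mulr1 add0r; split; [exact: (ideal0 HQ) | exact: R1 |].
apply/nsfQ/(star_f_mono _ (star_f_mulmod1 graded_subring Hst (sf_addM _ _ hx nQx) (sf_addM _ _ hy nQy))).
apply: span_ind => [|u v|r _ Rr [_ [_ [[q [r1 [Qq Rr1 ->]]] [[q' [r2 [Qq' Rr2 ->]]] ->]]]]].
- exact: (ideal0 HQ).
- exact: (idealD HQ).
apply: (ideal_mull HQ Rr).
have -> : (q + x * r1) * (q' + y * r2) = (q' + y * r2) * q + r1 * q' * x + r1 * r2 * (x * y) by ring.
have [Rx Ry] := (Rg_sub hx, Rg_sub hy).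
apply: (idealD HQ (idealD HQ _ _)).
- exact: (ideal_mull HQ (RD (ideal_sub HQ Qq') (RM Ry Rr2)) Qq).
- exact: (ideal_mulr HQ Rx (ideal_mull HQ Rr1 Qq')).
- exact: (ideal_mull HQ (RM Rr1 Rr2) Qxy).
Qed.


Lemma exists_homog_star_prime I0 : homog_proper I0 ->
  exists2 Q, homog_star_prime Q & incl I0 Q.
Proof.
move=> I0p; have [Q [Qp I0Q Qmax]] := Zorn_above I0p homog_proper_bigcup.
by exists Q => //; apply: homog_proper_max_prime.
Qed.


Definition Agens (g : {poly K}) :=
  [seq comp g`_i a | i <- iota 0 (size g), a <- supp g`_i].

Lemma Agens_homog g y : inRX R g -> y \in Agens g -> R y /\ is_homog y.
Proof.
by move=> Rg_ /allpairsPdep[i [a [_ _ ->]]]; split; [apply: Rg_sub (comp_homog _ _) | exists a; apply: comp_homog].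
Qed.

Lemma mem_Agens g i a : inRX R g -> comp g`_i a != 0 -> comp g`_i a \in Agens g.
Proof.
move=> Rg_ nz; apply/allpairsPdep; exists i, a; split => //.
  rewrite mem_iota add0n /=; apply: contraNT nz; rewrite -leqNgt => /(nth_default 0) ->.
  by rewrite comp0.
by have [_ _ _ out] := compP (Rg_ i); apply: contraNT nz => /out ->.
Qed.

Lemma Af_span g : inRX R g -> Af R Rg g = span Rs (fun y => y \in Agens g).
Proof.
move=> Rg_; apply/funext => x; apply/propext; split; last first.
  apply: span_mono => _ /allpairsPdep[i [a [_ ai ->]]].
  by have [us hc e _] := compP (Rg_ i); exists i, (supp g`_i), (comp g`_i); split => //; exists a.
apply: span_ind; [exact: span0 | exact: spanD |].
move=> r _ Rr [i [s [c [us hc e [a sa ->]]]]]; apply: (spanM (subringM graded_subring)) => //.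
have -> : c a = comp g`_i a by rewrite (comp_unique us hc e) sa.
have [->|nz] := eqVneq (comp g`_i a) 0; first exact: span0.
exact: span_gen (subring1 graded_subring) (mem_Agens Rg_ nz).
Qed.


Section ContentIdeal.
Variables (g : {poly K}) (Rg_ : inRX R g).

Lemma Af_ideal : ideal Rs (Af R Rg g).
Proof. by rewrite Af_span //; apply: ideal_span => y /(Agens_homog Rg_) []. Qed.

Lemma Af_comp_closed : comp_closed (Af R Rg g).
Proof. by rewrite Af_span //; apply: comp_closed_span => y /(Agens_homog Rg_). Qed.

Lemma Af_coef i : Af R Rg g g`_i.
Proof.
have [_ _ -> _] := compP (Rg_ i); apply: (ideal_sum Af_ideal) => a _.
have [->|nz] := eqVneq (comp g`_i a) 0; first exact: (ideal0 Af_ideal).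
by rewrite Af_span //; apply: span_gen (subring1 graded_subring) (mem_Agens Rg_ nz).
Qed.

Lemma Af_min Q : ideal Rs Q -> comp_closed Q -> coefs_in Q g -> incl (Af R Rg g) Q.
Proof.
move=> HQ Qcomp Qg; rewrite Af_span //; apply: span_ind; [exact: (ideal0 HQ) | exact: (idealD HQ) |].
by move=> r _ Rr /allpairsPdep[i [a [_ _ ->]]]; apply: (ideal_mull HQ Rr (Qcomp _ _ (Qg i))).
Qed.

Hypothesis g_nz : g != 0.

Lemma Af_nz_submod : nz_submod Rs (Af R Rg g).
Proof.
split; first by have [] := Af_ideal; split.
have [i gi_nz] : exists i, g`_i != 0 by exists (size g).-1; rewrite -lead_coefE lead_coef_eq0.
by exists g`_i; split => //; apply: Af_coef.
Qed.

Lemma Af_star_f1 : st (Af R Rg g) 1 -> sf (Af R Rg g) 1.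
Proof. by move=> st1; exists (Agens g); rewrite -Af_span //; split => //; case: Af_nz_submod. Qed.

End ContentIdeal.


Lemma Nstar_coefs_notin g Q : Nstar R Rg st g -> homog_star_prime Q -> ~ coefs_in Q g.
Proof.
move=> [g_nz Rg_ stA] [[HQ _] Qcomp nsfQ] Qg; apply/nsfQ/(star_f_mono (Af_min Rg_ HQ Qcomp Qg)).
by apply: Af_star_f1 => //; apply/stA/(st_R1 graded_subring Hst).
Qed.

Lemma Nstar_of g : g != 0 -> inRX R g ->
  (forall Q, homog_star_prime Q -> ~ coefs_in Q g) -> Nstar R Rg st g.
Proof.
move=> g_nz Rg_ gQ; split => //; have nzA := Af_nz_submod Rg_ g_nz.
have [sf1|nsf1] := pselect (sf (Af R Rg g) 1).
  exact: (st_eq_R graded_subring Hst nzA (ideal_sub (Af_ideal Rg_)) (star_f_sub_st graded_subring Hst nzA sf1)).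
have [Q Qp AQ] := exists_homog_star_prime (And3 (Af_ideal Rg_) (Af_comp_closed Rg_) nsf1).
by case: (gQ Q Qp) => i; apply/AQ/Af_coef.
Qed.


Local Notation N := (Nstar R Rg st).
Local Notation NA := (NA R Rg st).

Lemma inRX_mul p q : inRX R p -> inRX R q -> inRX R (p * q).
Proof. exact: (coefs_in_mull (ideal_self graded_subring)). Qed.

Lemma inRXC c : R c -> inRX R c%:P.
Proof. by move=> Rc i; rewrite coefC; case: eqP; rewrite ?R0. Qed.

Lemma Nstar1 : N 1.
Proof.
apply: Nstar_of; [exact: oner_neq0 | by rewrite -polyC1; apply/inRXC/R1 |].
move=> Q [[HQ _] _ nsfQ] /(_ 0%N); rewrite coef1 eqxx => Q1.
exact/nsfQ/(star_f1_of_1 graded_subring Hst (ideal_submod HQ) Q1).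
Qed.

Lemma NstarM g h : N g -> N h -> N (g * h).
Proof.
move=> Ng Nh; have [g_nz Rg_ _] := Ng; have [h_nz Rh _] := Nh.
apply: Nstar_of; [by rewrite mulf_neq0 | exact: inRX_mul |].
move=> Q Qp; have [[HQ Qprime] _ _] := Qp.
exact: (coefs_in_prime HQ graded_subring Qprime Rg_ Rh (Nstar_coefs_notin Ng Qp) (Nstar_coefs_notin Nh Qp)).
Qed.

Lemma NA_poly p : inRX R p -> NA p%:F.
Proof. by move=> Rp; exists p, 1; split => //; [exact: Nstar1 | rewrite tofrac1 divr1]. Qed.

Lemma NA_subring : subring NA.
Proof.
split; first by rewrite -tofrac1; apply/NA_poly; rewrite -polyC1; apply/inRXC/R1.
  move=> _ _ [p [g [Rp Ng ->]]] [p' [g' [Rp' Ng' ->]]].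
  have [[g_nz Rg_ _] [g'_nz Rg' _]] := (Ng, Ng').
  exists (p * g' - p' * g), (g * g'); split; [|exact: NstarM|].
    move=> i; rewrite coefB; apply: (subringB graded_subring); exact: inRX_mul.
  by rewrite -mulNr addf_div ?tofrac_eq0 // tofracB !tofracM mulNr.
move=> _ _ [p [g [Rp Ng ->]]] [p' [g' [Rp' Ng' ->]]].
by exists (p * p'), (g * g'); split; [exact: inRX_mul | exact: NstarM | rewrite mulf_div !tofracM].
Qed.


Lemma NA0 : NA 0. Proof. exact: (subring0 NA_subring). Qed.
Lemma NA1 : NA 1. Proof. exact: (subring1 NA_subring). Qed.
Lemma NAD x y : NA x -> NA y -> NA (x + y). Proof. exact: (subringD NA_subring). Qed.
Lemma NAM x y : NA x -> NA y -> NA (x * y). Proof. exact: (subringM NA_subring). Qed.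

Section QuotientsOverPrime.
Variables (Q : K -> Prop) (Qp : homog_star_prime Q).

Definition Qfrac z := exists p g, [/\ inRX R p, coefs_in Q p, N g & z = p%:F / g%:F].

Lemma Qfrac_ideal : ideal NA Qfrac.
Proof.
have [[HQ _] _ _] := Qp.
split.
- by move=> _ [p [g [Rp _ Ng ->]]]; exists p, g.
- exists 0, 1; split; [| |exact: Nstar1|by rewrite tofrac0 mul0r] => i; rewrite coef0.
    exact: R0.
  exact: (ideal0 HQ).
- move=> _ _ [p [g [Rp Qp_ Ng ->]]] [p' [g' [Rp' Qp' Ng' ->]]].
  have [[g_nz Rg_ _] [g'_nz Rg' _]] := (Ng, Ng').
  exists (p * g' + p' * g), (g * g'); split; [|
    |exact: NstarM|by rewrite addf_div ?tofrac_eq0 // tofracD !tofracM].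
    by move=> i; rewrite coefD; apply: RD; apply: inRX_mul.
  by move=> i; rewrite coefD; apply: (idealD HQ); [exact: (coefs_in_mulr HQ Qp_ Rg') | exact: (coefs_in_mulr HQ Qp' Rg_)].
- move=> _ _ [p0 [g0 [Rp0 Ng0 ->]]] [p [g [Rp Qp_ Ng ->]]].
  exists (p0 * p), (g0 * g); split; [exact: inRX_mul | exact: (coefs_in_mull HQ Rp0 Qp_) | exact: NstarM |].
  by rewrite mulf_div !tofracM.
Qed.

Lemma Qfrac_not1 : ~ Qfrac 1.
Proof.
move=> [p [g [Rp Qp_ Ng e]]]; have [g_nz _ _] := Ng.
have /eqP : p%:F = g%:F by rewrite -[g%:F]mul1r e divfK ?tofrac_eq0.
by rewrite tofrac_eq => /eqP pg; apply: (Nstar_coefs_notin Ng Qp); rewrite -pg.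
Qed.

Lemma not_Qfrac_nz e w : ~ Qfrac ((e%:P)%:F * w) -> e != 0.
Proof.
by move=> nQ; apply/eqP => e0; apply: nQ; rewrite e0 polyC0 tofrac0 mul0r; apply: (ideal0 Qfrac_ideal).
Qed.

End QuotientsOverPrime.

Lemma homog_star_prime_not1 Q : homog_star_prime Q -> ~ Q 1.
Proof. by move=> [[HQ _] _ nsfQ] /(star_f1_of_1 graded_subring Hst (ideal_submod HQ)). Qed.

Lemma homog_multiplier_seq Q e (l : seq K) : homog_star_prime Q ->
  (forall e', e' \in l -> exists t, [/\ R t, is_homog t, ~ Q t & R (e' * t / e)]) ->
  exists T, [/\ R T, is_homog T, ~ Q T & forall e', e' \in l -> R (e' * T / e)].
Proof.
move=> Qp; have [[_ Qprime] _ _] := Qp; elim: l => [_|e1 l IH le].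
  by exists 1; split => //; [exact: R1 | exists 0; exact: Rg_1 | exact: homog_star_prime_not1].
have [|T [RT [a hT] nQT lT]] := IH; first by move=> e' e'l; apply: le; rewrite inE e'l orbT.
have [t [Rt [b ht] nQt e1t]] := le e1 (mem_head _ _).
exists (t * T); split; [exact: RM | by exists (b + a); apply: RgM | by case/Qprime |].
move=> e'; rewrite inE => /orP[/eqP ->|e'l].
  by rewrite (_ : _ / e = e1 * t / e * T); [apply: RM | ring].
by rewrite (_ : _ / e = t * (e' * T / e)); [apply/RM/lT | ring].
Qed.

Section ContentOf.
Variables (f : {poly K}) (Rf : inRX R f).
Local Notation A := (Af R Rg f).
Local Notation gens := (Agens f).
Local Notation I := (extNA R Rg st A).
Local Notation J := (mulmod Rs A (colon Rs A)).

Lemma A_gen e : e \in gens -> A e.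
Proof. by move=> eg; rewrite Af_span //; apply: span_gen (subring1 graded_subring) eg. Qed.

Lemma colon_of_gens x : (forall e, e \in gens -> R (x * e)) -> colon Rs A x.
Proof.
move=> xg y; rewrite Af_span //; move: y; apply: (span_ind (E := fun y => R (x * y))).
- by rewrite mulr0 R0.
- by move=> u v; rewrite mulrDr; apply: RD.
- by move=> r e Rr eg; rewrite mulrCA; apply/RM/xg.
Qed.

Definition colon_A w := forall a, A a -> NA ((a%:P)%:F * w).

Lemma colon_A_of_colon w : colon NA I w -> colon_A w.
Proof. by move=> wI a Aa; rewrite mulrC; apply/wI/(span_gen NA1); exists a. Qed.

Lemma exists_gen_outside_Qfrac Q : homog_star_prime Q -> invertible NA I ->
  exists e w, [/\ e \in gens, colon_A w & ~ Qfrac Q ((e%:P)%:F * w)].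
Proof.
move=> Qp Iinv; apply: contrapT => /forallNP noe; apply: (Qfrac_not1 Qp).
have HV := Qfrac_ideal Qp.
have genV e w : e \in gens -> colon_A w -> Qfrac Q ((e%:P)%:F * w).
  by move=> eg wA; apply: contrapT => nV; apply: (noe e); exists w.
have AV a w : A a -> colon_A w -> Qfrac Q ((a%:P)%:F * w).
  move=> + wA; rewrite Af_span //; move: a.
  apply: (span_ind (E := fun a => Qfrac Q ((a%:P)%:F * w))).
  - by rewrite tofrac0 mul0r; apply: (ideal0 HV).
  - by move=> u v; rewrite polyCD tofracD mulrDl; apply: (idealD HV).
  - move=> r e Rr eg; rewrite polyCM tofracM -mulrA.
    by apply: (ideal_mull HV) (NA_poly (inRXC Rr)) (genV e w eg wA).
have /Iinv : NA 1 := NA1; apply: span_ind; [exact: (ideal0 HV) | exact: (idealD HV) |].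
move=> r _ NAr [x [y [Ix [yI ->]]]]; apply: (ideal_mull HV NAr); move: x Ix.
apply: (span_ind (E := fun x => Qfrac Q (x * y))).
- by rewrite mul0r; apply: (ideal0 HV).
- by move=> u v; rewrite mulrDl; apply: (idealD HV).
- move=> r' _ NAr' [a Aa ->]; rewrite -mulrA; apply: (ideal_mull HV NAr').
  exact/AV/colon_A_of_colon.
Qed.

Lemma coefs_notin_comp Q p : ideal Rs Q -> inRX R p -> ~ coefs_in Q p ->
  exists i a, ~ Q (comp p`_i a).
Proof.
move=> HQ Rp /existsNP[i nQ]; exists i; apply: contrapT => /forallNP /(_ _) /contrapT allQ.
by apply: nQ; have [_ _ -> _] := compP (Rp i); apply: (ideal_sum HQ).
Qed.

Lemma homog_multiplier Q e w e' : homog_star_prime Q -> e \in gens -> colon_A w ->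
  ~ Qfrac Q ((e%:P)%:F * w) -> e' \in gens ->
  exists t, [/\ R t, is_homog t, ~ Q t & R (e' * t / e)].
Proof.
move=> Qp eg wA nQew e'g; have [[HQ Qprime] _ _] := Qp.
have [Re [d hd]] := Agens_homog Rf eg; have [Re' [d' hd']] := Agens_homog Rf e'g.
have e_nz := not_Qfrac_nz Qp nQew.
have [p [g [Rp Ng ew]]] := wA e (A_gen eg); have [p' [g' [Rp' Ng' ew']]] := wA e' (A_gen e'g).
have [[g_nz Rg_ _] [g'_nz Rg' _]] := (Ng, Ng').
have nQp : ~ coefs_in Q p by move=> Qp_; apply: nQew; exists p, g.
have cross : e'%:P * (p * g') = e%:P * (p' * g).
  have pE : p%:F = (e%:P)%:F * w * g%:F by rewrite ew divfK ?tofrac_eq0.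
  have pE' : p'%:F = (e'%:P)%:F * w * g'%:F by rewrite ew' divfK ?tofrac_eq0.
  by apply/eqP; rewrite -tofrac_eq !tofracM pE pE'; apply/eqP; ring.
have Rpg' := inRX_mul Rp Rg'.
have [i [a nQt]] := coefs_notin_comp HQ Rpg' (coefs_in_prime HQ graded_subring Qprime Rp Rg' nQp (Nstar_coefs_notin Ng' Qp)).
exists (comp (p * g')`_i a); split => //; [exact: Rg_sub (comp_homog _ _) | by exists a; apply: comp_homog |].
have [r Rr er] := comp_mul_homog_ex (d' + a) hd (inRX_mul Rp' Rg_ i).
have := comp_mul_homog a hd' (Rpg' i); rewrite -!coefCM cross coefCM er => <-.
by rewrite mulrC mulrA mulVf ?mul1r.
Qed.

Lemma star_f_invertible_of_invertible : invertible NA I -> star_f_invertible R st A.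
Proof.
move=> Iinv; have JR : incl J Rs := @mulmod_colon_sub _ _ graded_subring A.
have [sf1|nsf1] := pselect (sf J 1); first exact: (star_f_eq_R graded_subring Hst JR sf1).
pose I0 := span Rs (fun y => J y /\ is_homog y).
have I0J : incl I0 J.
  by apply: span_ind => [||r y Rr [Jy _]]; [exact: span0 | exact: spanD | exact: spanM (subringM graded_subring) Rr Jy].
have I0p : homog_proper I0.
  split; [apply: ideal_span => y [/JR] | apply: comp_closed_span => y [/JR] | move/(star_f_mono I0J)] => //.
have [Q Qp I0Q] := exists_homog_star_prime I0p.
have [e [w [eg wA nQew]]] := exists_gen_outside_Qfrac Qp Iinv.
have [T [RT hT nQT eTR]] : exists T, [/\ R T, is_homog T, ~ Q T & forall e', e' \in gens -> R (e' * T / e)].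
  by apply: (homog_multiplier_seq Qp) => e' /(homog_multiplier Qp eg wA nQew).
have e_nz := not_Qfrac_nz Qp nQew.
have R1' := subring1 graded_subring.
case: nQT; apply/I0Q/(span_gen R1'); split => //; apply: (span_gen R1'); exists e, (T / e).
split; first exact: A_gen.
by split; [apply: colon_of_gens => e' /eTR; rewrite [T / e * e']mulrC mulrA | rewrite mulrC divfK].
Qed.

Lemma exists_gen_nz : f != 0 -> exists2 e, e \in gens & e != 0.
Proof.
move=> f_nz; have [i fi_nz] : exists i, f`_i != 0.
  by exists (size f).-1; rewrite -lead_coefE lead_coef_eq0.
have [_ _ fiE _] := compP (Rf i).
have [a nz] : exists a, comp f`_i a != 0.
  apply: contrapT => /forallNP nz; move: fi_nz; rewrite fiE big1 ?eqxx // => a _.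
  by have := nz a; case: eqP.
by exists (comp f`_i a) => //; apply: mem_Agens.
Qed.

Lemma gen_times_piece_notin Q e b' : homog_star_prime Q -> e \in gens -> colon Rs A b' ->
  is_homog (e * b') -> ~ Q (e * b') -> ~ coefs_in Q (b' *: f).
Proof.
move=> [[HQ _] Qcomp _] eg b'A [d hd] nQ.
have e_nz : e != 0 by apply/eqP => e_0; apply: nQ; rewrite e_0 mul0r; apply: (ideal0 HQ).
move=> Qb'f; apply: nQ; have /allpairsPdep[i [a [_ _ ea]]] := eg.
have Rb'f : inRX R (b' *: f) by move=> k; rewrite coefZ; apply/b'A/Af_coef.
have ha : Rg a e by rewrite ea; apply: comp_homog.
have := comp_mul_homog a hd (Rf i).
rewrite -ea -mulrA -coefZ [d + a]addrC (comp_mul_homog d ha (Rb'f i)) [e * b' * e]mulrC.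
by move=> /(mulfI e_nz) <-; apply: Qcomp.
Qed.

Lemma gens_mul_ideal Q b : ideal Rs Q -> (forall e, e \in gens -> Q (e * b)) ->
  forall a, A a -> Q (a * b).
Proof.
move=> HQ genQ a; rewrite Af_span //; move: a.
apply: (span_ind (E := fun a => Q (a * b))); rewrite ?mul0r.
- exact: (ideal0 HQ).
- by move=> u v; rewrite mulrDl; apply: (idealD HQ).
- by move=> r e Rr eg; rewrite -mulrA; apply/(ideal_mull HQ Rr)/genQ.
Qed.

Section Pieces.
Variables (e0 : K) (e0g : e0 \in gens) (e0_nz : e0 != 0).

(* Splitting [b] along the homogeneous components of [b e0] makes every
   [e' * piece] homogeneous for [e'] a homogeneous generator of [A]. *)
Definition pieces b := [seq comp (b * e0) c / e0 | c <- supp (b * e0)].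

Lemma pieces_sum b : colon Rs A b -> b = \sum_(b' <- pieces b) b'.
Proof.
move=> bA; rewrite big_map -mulr_suml.
by have [_ _ <- _] := compP (bA e0 (A_gen e0g)); rewrite mulfK.
Qed.

Lemma pieces_homog b b' : colon Rs A b -> b' \in pieces b ->
  colon Rs A b' /\ forall e', e' \in gens -> R (e' * b') /\ is_homog (e' * b').
Proof.
move=> bA /mapP[c _ ->]; have Rbe0 := bA e0 (A_gen e0g).
have [_ [d0 hd0]] := Agens_homog Rf e0g.
suff key e' : e' \in gens -> R (e' * (comp (b * e0) c / e0)) /\ is_homog (e' * (comp (b * e0) c / e0)).
  by split => //; apply: colon_of_gens => e' /key[]; rewrite mulrC.
move=> e'g; have [_ [d' hd']] := Agens_homog Rf e'g.
have Rbe' := bA e' (A_gen e'g).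
have [r Rr er] := comp_mul_homog_ex (d' + c) hd0 Rbe'.
have := comp_mul_homog c hd' Rbe0; rewrite (_ : e' * _ = e0 * (b * e')) ?er; last by ring.
move=> e'comp; have -> : e' * (comp (b * e0) c / e0) = r by rewrite mulrA -e'comp mulrC mulKf.
split => //; apply: (is_homog_factor hd0 e0_nz Rr); rewrite -er.
exact: comp_homog (RM (Rg_sub hd0) Rbe').
Qed.

Variables (bs : seq K) (bsA : forall b, b \in bs -> colon Rs A b).

Definition multiplier := Poly (flatten [seq pieces b | b <- bs]).

Lemma mem_multiplier_pieces b' : b' \in flatten [seq pieces b | b <- bs] ->
  colon Rs A b' /\ forall e', e' \in gens -> R (e' * b') /\ is_homog (e' * b').
Proof. by case/flattenP => _ /mapP[b bbs ->]; apply: pieces_homog (bsA bbs). Qed.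

Lemma multiplier_coef_colon k : colon Rs A multiplier`_k.
Proof.
rewrite coef_Poly; have [ks|ks] := ltnP k (size (flatten [seq pieces b | b <- bs])).
  by case: (mem_multiplier_pieces (mem_nth 0 ks)).
by rewrite nth_default // => y _; rewrite mul0r; apply: R0.
Qed.

Lemma inRX_A_multiplier a : A a -> inRX R (a%:P * multiplier).
Proof. by move=> Aa k; rewrite coefCM mulrC; apply: multiplier_coef_colon. Qed.

Lemma inRX_f_multiplier : inRX R (f * multiplier).
Proof.
move=> k; rewrite coefM; apply: R_sum => j _; rewrite mulrC.
exact/multiplier_coef_colon/Af_coef.
Qed.

Lemma multiplier_eq0 : multiplier = 0 -> forall b, b \in bs -> b = 0.
Proof.
move=> h0 b bbs; rewrite (pieces_sum (bsA bbs)) big1_seq // => b' /andP[_ b'b].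
have b'bs : b' \in flatten [seq pieces b | b <- bs] by apply/flattenP; exists (pieces b); rewrite ?map_f.
have := congr1 (fun p : {poly K} => p`_(index b' (flatten [seq pieces b | b <- bs]))) h0.
by rewrite /= coef_Poly nth_index // coef0.
Qed.

Lemma multiplier_coefs_notin Q : homog_star_prime Q -> coefs_in Q (f * multiplier) ->
  forall b, b \in bs -> forall e, e \in gens -> Q (e * b).
Proof.
move=> Qp Qfh b bbs e eg; have [[HQ Qprime] _ _] := Qp.
rewrite (pieces_sum (bsA bbs)) mulr_sumr big_seq; apply: (ideal_sum HQ) => b' b'b.
have b'bs : b' \in flatten [seq pieces b | b <- bs] by apply/flattenP; exists (pieces b); rewrite ?map_f.
have [b'A /(_ e eg)[Reb' heb']] := mem_multiplier_pieces b'bs.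
apply: contrapT => nQ; apply: (coefs_in_prime HQ graded_subring Qprime _ _ (gen_times_piece_notin Qp eg b'A heb' nQ) _
  (_ : coefs_in Q ((b' *: f) * (e%:P * multiplier)))).
- by move=> k; rewrite coefZ; apply/b'A/Af_coef.
- exact/inRX_A_multiplier/A_gen.
- by move=> /(_ (index b' (flatten [seq pieces b | b <- bs]))); rewrite coefCM coef_Poly nth_index.
- have -> : (b' *: f) * (e%:P * multiplier) = (e * b')%:P * (f * multiplier).
    by rewrite -mul_polyC polyCM; ring.
  exact: (coefs_in_mull HQ (inRXC Reb')).
Qed.

End Pieces.

Lemma exists_multiplier : f != 0 -> sf J 1 ->
  exists2 h, N (f * h) & forall a, A a -> inRX R (a%:P * h).
Proof.
move=> f_nz [s [sJ [y0 [y0_nz sy0]] st1]]; have R1' := subring1 graded_subring.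
have [bs bsA sbs] := span_prodset_seq R1' (subringM graded_subring)
  (fun x xs => sJ x (span_gen R1' xs)).
have [e0 e0g e0_nz] := exists_gen_nz f_nz.
exists (multiplier e0 bs); last exact: (inRX_A_multiplier e0g e0_nz bsA).
have s_in E : ideal Rs E -> (forall b, b \in bs -> forall a, A a -> E (a * b)) ->
    incl (span Rs (fun x => x \in s)) E.
  move=> HE bsE; apply: span_ind => [||r x Rr /sbs xs]; [exact: (ideal0 HE) | exact: (idealD HE) |].
  apply: (ideal_mull HE Rr); move: x xs; apply: span_ind => [||r' _ Rr' [a [b [Aa [bbs ->]]]]].
  - exact: (ideal0 HE).
  - exact: (idealD HE).
  - exact: (ideal_mull HE Rr' (bsE b bbs a Aa)).
apply: Nstar_of; [rewrite mulf_neq0 //; apply/eqP => h0 | exact: (inRX_f_multiplier e0g e0_nz bsA) |].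
  move/eqP: y0_nz; apply; apply: (s_in (fun x => x = 0)) sy0.
    by split => [x ->|//|x y -> ->|r x _ ->]; [exact: R0 | exact: addr0 | exact: mulr0].
  by move=> b /(multiplier_eq0 e0g e0_nz bsA h0) -> a _; rewrite mulr0.
move=> Q Qp Qfh; have [[HQ _] _ nsfQ] := Qp; apply: nsfQ; exists s; split => //.
- apply: (s_in _ HQ) => b bbs; apply: (gens_mul_ideal HQ).
  exact: (multiplier_coefs_notin e0g e0_nz bsA Qp Qfh bbs).
- by exists y0.
Qed.

Lemma extNA_principal h : N (f * h) -> (forall a, A a -> inRX R (a%:P * h)) ->
  sameset I (fNA R Rg st f).
Proof.
move=> Nfh Ah; have [fh_nz _ _] := Nfh.
have fhF_nz : (f * h)%:F != 0 by rewrite tofrac_eq0.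
have A_fNA a : A a -> exists2 w, NA w & (a%:P)%:F = f%:F * w.
  move=> Aa; exists ((a%:P * h)%:F / (f * h)%:F).
    by exists (a%:P * h), (f * h); split; [exact: Ah | |].
  by rewrite mulrA -tofracM mulrCA tofracM mulfK.
move=> z; split.
  apply: span_ind => [|_ _ [u [NAu ->]] [v [NAv ->]]|r _ NAr [a Aa ->]].
  - by exists 0; split; [exact: NA0 | rewrite mulr0].
  - by exists (u + v); split; [exact: NAD | rewrite mulrDr].
  - by have [w NAw ->] := A_fNA a Aa; exists (r * w); split; [exact: NAM | rewrite mulrCA].
move=> [n [NAn ->]].
have -> : f%:F = \sum_(i < size f) ((f`_i)%:P)%:F * ('X^i)%:F.
  by rewrite -[in X in X = _](coefK f) poly_def rmorph_sum; apply: eq_bigr => i _; rewrite -mul_polyC rmorphM.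
rewrite mulr_suml; apply: big_ind => [|x y|i _]; [exact: span0 | exact: spanD |].
rewrite -mulrA mulrC; apply: (spanM (subringM NA_subring)).
- apply/NAM/NAn/NA_poly => k; rewrite coefXn; case: eqP => _; [exact: R1 | exact: R0].
- by apply: span_gen NA1 _; exists f`_i => //; exact: (Af_coef Rf).
Qed.

End ContentOf.

End StarPrime.

End GradedDomain.

Theorem corollary2p6 (G : nmodType) (K : fieldType) (R : pred K)
  (Rg : G -> pred K) (st : (K -> Prop) -> (K -> Prop)) (f : {poly K}) :
  grading_monoid G ->
  graded_domain R Rg ->
  semistar R st ->
  (* R^star is properly contained in R_H *)
  incl (st (Rset R)) (RH R Rg) ->
  (exists x, RH R Rg x /\ ~ st (Rset R) x) ->
  f != 0 -> inRX R f ->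
  (star_f_invertible R st (Af R Rg f) <->
     invertible (NA R Rg st) (extNA R Rg st (Af R Rg f))) /\
  (invertible (NA R Rg st) (extNA R Rg st (Af R Rg f)) <->
     sameset (extNA R Rg st (Af R Rg f)) (fNA R Rg st f)).
Proof.
move=> HG HR Hst _ _ f_nz Rf.
have principal_invertible : sameset (extNA R Rg st (Af R Rg f)) (fNA R Rg st f) ->
    invertible (NA R Rg st) (extNA R Rg st (Af R Rg f)).
  by move=> I_fNA; apply: (invertible_principal (NA_subring HG HR Hst) _ I_fNA); rewrite tofrac_eq0.
have star_f_principal : star_f_invertible R st (Af R Rg f) ->
    sameset (extNA R Rg st (Af R Rg f)) (fNA R Rg st f).
  move=> /(_ 1)[_ /(_ (st_R1 (graded_subring HR) Hst))] sf1.
  have [h Nfh Ah] := exists_multiplier HG HR Hst Rf f_nz sf1.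
  exact: (extNA_principal HG HR Hst Rf Nfh Ah).
have invertible_star_f := star_f_invertible_of_invertible HG HR Hst Rf.
split; split => [H1|H2]; first exact/principal_invertible/star_f_principal.
- exact: invertible_star_f.
- exact/star_f_principal/invertible_star_f.
- exact: principal_invertible.
Qed.
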